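(* Let $\tilde\sigma=(g_1,\dots,g_T)\in\Sigma$, let $\tau\in[T-1]$, and let $\bar\sigma$ be the input obtained from $\tilde\sigma$ by interchanging $g_\tau$ and $g_{\tau+1}$. Then $$\eta_{OPT}(\tilde\sigma^{[1:\tau]})-\eta_{OPT}(\tilde\sigma^{[1:\tau-1]})\ \ge\ \eta_{OPT}(\bar\sigma^{[1:\tau+1]})-\eta_{OPT}(\bar\sigma^{[1:\tau]}).$$
   Context: Fix $\Delta>0$ and $0<m\le M$. Let $\mathcal G$ be the family of all functions $g:[0,\Delta]\to\mathbb{R}$ that are concave, increasing and differentiable on $[0,\Delta]$ with $g(0)=0$ and $g'(0)\in[m,M]$. An input is a finite sequence $\sigma=(g_1,\dots,g_T)$, $T\ge1$, $g_t\in\mathcal G$; $\Sigma$ is the set of all inputs. For $0\le t\le T$, $\sigma^{[1:t]}=(g_1,\dots,g_t)$ ($\sigma^{[1:0]}$ is empty). $\eta_{OPT}(\sigma^{[1:t]})$ denotes the optimal value of $\max\sum_{s=1}^t g_s(v_s)$ subject to $\sum_{s=1}^t v_s\le\Delta$, $v_s\ge0$; $\eta_{OPT}$ of the empty sequence is $0$. *)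

From Stdlib Require Import Reals List ClassicalEpsilon.
Import ListNotations.
Open Scope R_scope.

Definition deriv_in (D : R) (g : R -> R) (x l : R) : Prop :=
  forall eps, 0 < eps -> exists delta, 0 < delta /\
    forall h, h <> 0 -> Rabs h < delta -> 0 <= x + h <= D ->
      Rabs ((g (x + h) - g x) / h - l) < eps.

Definition concave_on (D : R) (g : R -> R) : Prop :=
  forall x y t, 0 <= x <= D -> 0 <= y <= D -> 0 <= t <= 1 ->
    t * g x + (1 - t) * g y <= g (t * x + (1 - t) * y).

Definition increasing_on (D : R) (g : R -> R) : Prop :=
  forall x y, 0 <= x <= D -> 0 <= y <= D -> x <= y -> g x <= g y.

(* The family G (only the values on [0, D] matter). *)
Definition inG (D m M : R) (g : R -> R) : Prop :=
  concave_on D g /\ increasing_on D g /\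
  (forall x, 0 <= x <= D -> exists l, deriv_in D g x l) /\
  g 0 = 0 /\
  (exists l, deriv_in D g 0 l /\ m <= l <= M).

Definition objective (gs : list (R -> R)) (v : list R) : R :=
  fold_right (fun p acc => fst p (snd p) + acc) 0 (combine gs v).

Definition feasible_values (D : R) (gs : list (R -> R)) (y : R) : Prop :=
  exists v : list R, length v = length gs /\ Forall (fun a => 0 <= a) v /\
    fold_right Rplus 0 v <= D /\ y = objective gs v.

(* Optimal value: the supremum (= maximum, which is attained) of the feasible
   objective values. For the empty sequence this is 0. *)
Definition eta_OPT (D : R) (gs : list (R -> R)) : R :=
  epsilon (inhabits 0) (fun l => is_lub (feasible_values D gs) l).

(* Interchange of the elements in (1-indexed) positions tau and tau+1. *)
Definition swap_at (tau : nat) (l : list (R -> R)) : list (R -> R) :=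
  firstn (tau - 1) l ++ [nth tau l (fun _ => 0); nth (tau - 1) l (fun _ => 0)]
    ++ skipn (tau + 1) l.

From Stdlib Require Import Reals List.
From Stdlib Require Import ClassicalEpsilon Lra Lia.
Import ListNotations.
Open Scope R_scope.

(* Everything reduces to the exchange inequality
     eta(A b a) + eta(A) <= eta(A a) + eta(A b).
   Take an allocation (x, q, p) of A b a and an allocation y of A.  If y uses
   no more budget than x, then (y, p) is feasible for A a and (x, q) for A b.
   Otherwise mix x and y with weights l and 1 - l into two allocations of A
   whose budgets leave room for p and q respectively; concavity of each g in A
   makes the two mixtures worth at least x and y together.  Monotonicity only
   serves to bound the objective, so that the optima exist. *)

Local Notation sumR v := (fold_right Rplus 0 v).
Local Notation nonneg v := (Forall (fun a : R => 0 <= a) v).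

Lemma sumR_app (x y : list R) : sumR (x ++ y) = sumR x + sumR y.
Proof. induction x as [|a x IH]; simpl; lra. Qed.

Lemma sumR_nonneg (v : list R) : nonneg v -> 0 <= sumR v.
Proof. induction 1; simpl; lra. Qed.

Lemma nonneg_entries_le_sumR (D : R) (v : list R) :
  nonneg v -> sumR v <= D -> Forall (fun a => 0 <= a <= D) v.
Proof.
  induction 1 as [|a v Ha Hv IH]; intros Hs; constructor;
    pose proof (sumR_nonneg v Hv); simpl in Hs; [lra | apply IH; lra].
Qed.

Fixpoint mix (l : R) (x y : list R) : list R :=
  match x, y with
  | a :: x', b :: y' => (l * a + (1 - l) * b) :: mix l x' y'
  | _, _ => []
  end.

Lemma length_mix (l : R) (x y : list R) :
  length x = length y -> length (mix l x y) = length x.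
Proof.
  revert y; induction x as [|a x IH]; intros [|b y] H; simpl in *; try lia.
  now rewrite IH by lia.
Qed.

Lemma sumR_mix (l : R) (x y : list R) :
  length x = length y -> sumR (mix l x y) = l * sumR x + (1 - l) * sumR y.
Proof.
  revert y; induction x as [|a x IH]; intros [|b y] H; simpl in *; try lia.
  - ring.
  - rewrite IH by lia. ring.
Qed.

Lemma mix_nonneg (l : R) (x y : list R) :
  0 <= l <= 1 -> nonneg x -> nonneg y -> nonneg (mix l x y).
Proof.
  intros Hl Hx; revert y; induction Hx as [|a x Ha Hx IH]; intros [|b y] Hy;
    simpl; constructor; inversion Hy; subst; [nra | auto].
Qed.

Lemma objective_cons (g : R -> R) (gs : list (R -> R)) (a : R) (v : list R) :
  objective (g :: gs) (a :: v) = g a + objective gs v.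
Proof. reflexivity. Qed.

Lemma objective_app (A B : list (R -> R)) (x y : list R) :
  length x = length A -> objective (A ++ B) (x ++ y) = objective A x + objective B y.
Proof.
  revert x; induction A as [|g A IH]; intros [|a x] H; simpl in *; try lia.
  - unfold objective; simpl; ring.
  - rewrite !objective_cons, IH by lia. ring.
Qed.

Lemma objective_add_le_mix (D l : R) (A : list (R -> R)) (x y : list R) :
  0 <= l <= 1 -> Forall (concave_on D) A ->
  length x = length A -> length y = length A ->
  Forall (fun a => 0 <= a <= D) x -> Forall (fun a => 0 <= a <= D) y ->
  objective A x + objective A y
  <= objective A (mix l x y) + objective A (mix (1 - l) x y).
Proof.
  intros Hl HA; revert x y.
  induction HA as [|g A Hg HA IH]; intros [|a x] [|b y] Hx Hy Fx Fy;
    simpl in *; try lia.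
  - unfold objective; simpl; lra.
  - inversion Fx; inversion Fy; subst. rewrite !objective_cons.
    pose proof (IH x y ltac:(lia) ltac:(lia) ltac:(assumption) ltac:(assumption)).
    pose proof (Hg a b l ltac:(assumption) ltac:(assumption) Hl).
    pose proof (Hg a b (1 - l) ltac:(assumption) ltac:(assumption) ltac:(lra)).
    replace (1 - (1 - l)) with l in * by ring. lra.
Qed.

Lemma objective_le_sum_Rmax (D : R) (gs : list (R -> R)) (v : list R) :
  Forall (increasing_on D) gs -> length v = length gs ->
  Forall (fun a => 0 <= a <= D) v ->
  objective gs v <= fold_right (fun g acc => Rmax 0 (g D) + acc) 0 gs.
Proof.
  intros Hgs; revert v.
  induction Hgs as [|g gs Hg Hgs IH]; intros [|a v] Hl Fv; simpl in *; try lia.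
  - unfold objective; simpl; lra.
  - inversion Fv; subst. rewrite objective_cons.
    pose proof (IH v ltac:(lia) ltac:(assumption)).
    pose proof (Hg a D ltac:(assumption) ltac:(lra) ltac:(lra)).
    pose proof (Rmax_r 0 (g D)). lra.
Qed.

Lemma eta_OPT_is_lub (D : R) (gs : list (R -> R)) :
  0 <= D -> Forall (increasing_on D) gs ->
  is_lub (feasible_values D gs) (eta_OPT D gs).
Proof.
  intros HD Hgs. unfold eta_OPT. apply epsilon_spec.
  destruct (completeness (feasible_values D gs)) as [l Hl]; [| |now exists l].
  - exists (fold_right (fun g acc => Rmax 0 (g D) + acc) 0 gs).
    intros y (v & Hl & Hn & Hs & ->).
    apply objective_le_sum_Rmax; auto. now apply nonneg_entries_le_sumR.
  - exists (objective gs (repeat 0 (length gs))), (repeat 0 (length gs)).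
    repeat split.
    + apply repeat_length.
    + apply Forall_forall; intros z Hz. apply repeat_spec in Hz. lra.
    + clear Hgs. induction (length gs); simpl; lra.
Qed.

Lemma feasible_values_snoc (D : R) (A : list (R -> R)) (g : R -> R) (u : list R) (p : R) :
  length u = length A -> nonneg u -> 0 <= p -> sumR u + p <= D ->
  feasible_values D (A ++ [g]) (objective A u + g p).
Proof.
  intros Hu Hnu Hp Hs. exists (u ++ [p]). repeat split.
  - rewrite !length_app; simpl; lia.
  - apply Forall_app; auto.
  - rewrite sumR_app; simpl; lra.
  - rewrite objective_app by auto. unfold objective; simpl; ring.
Qed.

(* For X < Y the budgets of [mix l x y] and [mix (1 - l) x y] are
   [Y - l (Y - X)] and [X + l (Y - X)]; this weight makes them fit next to
   [p] and [q] respectively. *)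
Lemma exchange_weight (D X Y p q : R) :
  0 <= q -> 0 <= p -> X < Y -> Y <= D -> X + q + p <= D ->
  exists l, 0 <= l <= 1 /\ Y - l * (Y - X) + p <= D /\ X + l * (Y - X) + q <= D.
Proof.
  intros Hq Hp HXY HY Hs. destruct (Rle_dec (Y + p - D) 0).
  - exists 0. lra.
  - exists ((Y + p - D) / (Y - X)).
    assert (E : (Y + p - D) / (Y - X) * (Y - X) = Y + p - D) by (field; lra).
    rewrite E. repeat split; try lra.
    + apply Rle_mult_inv_pos; lra.
    + apply (Rmult_le_reg_r (Y - X)); [lra | rewrite E; lra].
Qed.

Section Exchange.

Variables (D : R) (A : list (R -> R)) (a b : R -> R).
Hypotheses (HD : 0 <= D) (HcA : Forall (concave_on D) A)
  (HiA : Forall (increasing_on D) A)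
  (Ha : increasing_on D a) (Hb : increasing_on D b).

Let Ea := eta_OPT D (A ++ [a]).
Let Eb := eta_OPT D (A ++ [b]).

Lemma objective_snoc_le_eta (g : R -> R) (u : list R) (p : R) :
  increasing_on D g -> length u = length A -> nonneg u -> 0 <= p ->
  sumR u + p <= D -> objective A u + g p <= eta_OPT D (A ++ [g]).
Proof.
  intros Hg Hu Hnu Hp Hs. apply (eta_OPT_is_lub D (A ++ [g]) HD).
  - apply Forall_app; auto.
  - now apply feasible_values_snoc.
Qed.

Lemma allocation_exchange (x y : list R) (q p : R) :
  length x = length A -> length y = length A -> nonneg x -> nonneg y ->
  0 <= q -> 0 <= p -> sumR x + q + p <= D -> sumR y <= D ->
  objective A x + b q + a p + objective A y <= Ea + Eb.
Proof.
  intros Hlx Hly Hnx Hny Hq Hp Hsx Hsy.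
  pose proof (sumR_nonneg x Hnx). pose proof (sumR_nonneg y Hny).
  destruct (Rle_dec (sumR y) (sumR x)).
  - pose proof (objective_snoc_le_eta a y p Ha Hly Hny Hp ltac:(lra)).
    pose proof (objective_snoc_le_eta b x q Hb Hlx Hnx Hq ltac:(lra)).
    unfold Ea, Eb. lra.
  - destruct (exchange_weight D (sumR x) (sumR y) p q) as (l & Hl & Hfa & Hfb);
      try lra.
    assert (Hl' : 0 <= 1 - l <= 1) by lra.
    pose proof (objective_add_le_mix D l A x y Hl HcA Hlx Hly
      (nonneg_entries_le_sumR D x Hnx ltac:(lra))
      (nonneg_entries_le_sumR D y Hny Hsy)).
    pose proof (objective_snoc_le_eta a (mix l x y) p Ha
      ltac:(rewrite length_mix; lia) (mix_nonneg _ x y Hl Hnx Hny) Hp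
      ltac:(rewrite sumR_mix by lia; lra)).
    pose proof (objective_snoc_le_eta b (mix (1 - l) x y) q Hb
      ltac:(rewrite length_mix; lia) (mix_nonneg _ x y Hl' Hnx Hny) Hq
      ltac:(rewrite sumR_mix by lia; lra)).
    unfold Ea, Eb. lra.
Qed.

Lemma feasible_values_exchange (y1 y2 : R) :
  feasible_values D (A ++ [b; a]) y1 -> feasible_values D A y2 -> y1 + y2 <= Ea + Eb.
Proof.
  intros (v & Hl & Hn & Hs & ->) (y & Hly & Hny & Hsy & ->).
  rewrite length_app in Hl; simpl in Hl.
  rewrite <- (firstn_skipn (length A) v) in Hn, Hs |- *.
  assert (Hlx : length (firstn (length A) v) = length A)
    by (apply firstn_length_le; lia).
  assert (Hlw : length (skipn (length A) v) = 2%nat) by (rewrite length_skipn; lia).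
  destruct (skipn (length A) v) as [|q [|p [|]]]; simpl in Hlw; try lia.
  apply Forall_app in Hn as [Hnx Hnw]. inversion Hnw as [|? ? Hq Hnw']; subst.
  inversion Hnw' as [|? ? Hp _]; subst.
  rewrite sumR_app in Hs; simpl in Hs.
  rewrite objective_app by auto. unfold objective at 2; simpl.
  pose proof (allocation_exchange _ y q p Hlx Hly Hnx Hny Hq Hp ltac:(lra) Hsy).
  lra.
Qed.

Lemma eta_OPT_exchange :
  eta_OPT D (A ++ [b; a]) + eta_OPT D A <= Ea + Eb.
Proof.
  destruct (eta_OPT_is_lub D (A ++ [b; a]) HD) as [_ Lba];
    [apply Forall_app; auto|].
  destruct (eta_OPT_is_lub D A HD HiA) as [_ LA].
  assert (eta_OPT D A <= Ea + Eb - eta_OPT D (A ++ [b; a])); [|lra].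
  apply LA. intros y2 Hy2.
  assert (eta_OPT D (A ++ [b; a]) <= Ea + Eb - y2); [|lra].
  apply Lba. intros y1 Hy1. pose proof (feasible_values_exchange y1 y2 Hy1 Hy2). lra.
Qed.

End Exchange.

Lemma swap_at_app (A rest : list (R -> R)) (a b : R -> R) :
  swap_at (length A + 1) (A ++ a :: b :: rest) = A ++ b :: a :: rest.
Proof.
  unfold swap_at.
  replace (length A + 1 - 1)%nat with (length A + 0)%nat by lia.
  rewrite firstn_app_2, <- Nat.add_assoc, skipn_app, !app_nth2_plus,
    (skipn_all2 A) by lia.
  replace (length A + (1 + 1) - length A)%nat with 2%nat by lia.
  now rewrite !app_nil_r.
Qed.

Theorem lemma3 (D m M : R) (hD : 0 < D) (hm : 0 < m) (hmM : m <= M)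
  (sigma : list (R -> R)) (hG : forall g, In g sigma -> inG D m M g)
  (tau : nat) (htau1 : (1 <= tau)%nat) (htau2 : (tau <= length sigma - 1)%nat) :
  eta_OPT D (firstn tau sigma) - eta_OPT D (firstn (tau - 1) sigma)
  >= eta_OPT D (firstn (tau + 1) (swap_at tau sigma))
     - eta_OPT D (firstn tau (swap_at tau sigma)).
Proof.
  assert (HA : length (firstn (tau - 1) sigma) = (tau - 1)%nat)
    by (apply firstn_length_le; lia).
  assert (Hsplit := firstn_skipn (tau - 1) sigma).
  assert (Hrest := length_skipn (tau - 1) sigma).
  remember (firstn (tau - 1) sigma) as A eqn:HeqA; clear HeqA.
  destruct (skipn (tau - 1) sigma) as [|a [|b rest]]; simpl in Hrest; try lia.
  subst sigma. replace tau with (length A + 1)%nat by lia.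
  assert (HcG : Forall (fun g => concave_on D g /\ increasing_on D g) (A ++ a :: b :: rest)).
  { apply Forall_forall. intros g Hg. now destruct (hG g Hg) as (? & ? & _). }
  rewrite swap_at_app, <- Nat.add_assoc, !firstn_app_2. simpl.
  apply Forall_app in HcG as [HcA Hab]. inversion Hab as [|? ? [_ Ha] Hb']; subst.
  inversion Hb' as [|? ? [_ Hb] _]; subst.
  pose proof (eta_OPT_exchange D A a b ltac:(lra)
    (Forall_impl _ (fun g H => proj1 H) HcA) (Forall_impl _ (fun g H => proj2 H) HcA)
    Ha Hb).
  lra.
Qed.
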